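(* For every even integer $n\ge4$, $\mu_n$-almost every choice function $\eta\in\mathscr{C}_n$ is random.
   Context: Let $\mathcal{A}_n=\{1,\dots,5n-6\}$, $\mathcal{A}_n^m$ the words of length $m$ over $\mathcal{A}_n$ ($\mathcal{A}_n^0=\{\varepsilon\}$), $\mathcal{A}_n^*=\bigcup_{m\ge0}\mathcal{A}_n^m$, $\mathcal{A}_n^{\mathbb{N}}$ the infinite words; for a word $w=i_1i_2\cdots$, $w(j)=i_1\cdots i_j$. For $u\in\mathcal{A}_n^j$ and $m\ge j$, $\mathcal{A}^m_{n,u}=\{v\in\mathcal{A}_n^m:v(j)=u\}$. $\nu_n$ is the probability measure on $\mathcal{A}_n^{\mathbb{N}}$ with $\nu_n(\{\tau:\tau(|u|)=u\})=(5n-6)^{-|u|}$ for all $u\in\mathcal{A}_n^*$. $\mathscr{C}_n$ is the set of choice functions $\eta:\mathcal{A}_n^*\to\{1,2\}$, i.e. $\{1,2\}^{\mathcal{A}_n^*}$, and $\mu_n$ is the product probability measure on it under which the values $\eta(u)$, $u\in\mathcal{A}_n^*$, are independent and each equals $1$ or $2$ with probability $1/2$. A choice function $\eta$ is random if for $\nu_n$-a.e. $w=i_1i_2\cdots\in\mathcal{A}_n^{\mathbb{N}}$ the following holds: for every $N\in\mathbb{N}$ and every integer $k\ge0$ there is an integer $\ell\ge N$ such that (R1) $\eta\equiv1$ on $\bigcup_{j=0}^{k-1}\mathcal{A}^{\ell+j}_{n,w(\ell)}$ and $\eta\equiv2$ on $\bigcup_{j=0}^{2N+k-1}\mathcal{A}^{\ell-N+j}_{n,w(\ell-N)}\setminus\bigcup_{j=0}^{k-1}\mathcal{A}^{\ell+j}_{n,w(\ell)}$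 (the first union being empty when $k=0$), and (R2) $i_{\ell-N+1}>4n-4$. *)

From HB Require Import structures.
From mathcomp Require Import all_boot all_order all_algebra.
From mathcomp Require Import all_classical all_reals all_analysis.
Set Implicit Arguments. Unset Strict Implicit. Unset Printing Implicit Defensive.
Import Order.TTheory GRing.Theory Num.Theory.
Local Open Scope classical_set_scope.

(* ordinals of positive size are pointed (needed for g_sigma_algebraType) *)
HB.instance Definition _ (k : nat) := isPointed.Build 'I_k.+1 ord0.
Local Open Scope ring_scope.

(* The alphabet A_n = {1,...,5n-6}.  For n >= 2 we have 5n-6 = (5n-7).+1, and
   the ordinal i : 'I_(5n-7).+1 represents the letter (val i).+1. *)
Notation alph n := ('I_(5 * n - 7).+1).
Definition letter_val (n : nat) (i : alph n) : nat := (val i).+1.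

Definition pref (n : nat) (w : nat -> alph n) (j : nat) : seq (alph n) :=
  mkseq w j.

Definition nu_gen (n : nat) : set (set (nat -> alph n)) :=
  [set A | exists u : seq (alph n), A = [set w | pref w (size u) = u]].
Notation wordsT n := (g_sigma_algebraType (@nu_gen n)).

(* choice functions eta : A_n^* -> {1,2}, encoded with true = 1, false = 2;
   product sigma-algebra generated by the coordinate events {eta u = b} *)
Definition mu_gen (n : nat) : set (set (seq (alph n) -> bool)) :=
  [set A | exists (u : seq (alph n)) (b : bool), A = [set eta | eta u = b]].
Notation choiceT n := (g_sigma_algebraType (@mu_gen n)).

Definition nu_cyl (n : nat) (R : realType) (nu : probability (wordsT n) R) :=
  forall u : seq (alph n),
    nu [set w : wordsT n | pref w (size u) = u] = (((5 * n - 6)%:R : R) ^- size u)%:E.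

Definition mu_cyl (n : nat) (R : realType) (mu : probability (choiceT n) R) :=
  forall (us : seq (seq (alph n))) (c : seq (alph n) -> bool), uniq us ->
    mu [set eta : choiceT n | forall u, u \in us -> eta u = c u]
      = (((2%:R : R)^-1) ^+ size us)%:E.

Definition in_union (n : nat) (w : nat -> alph n) (l k : nat) (v : seq (alph n)) :=
  (l <= size v < l + k)%N /\ take l v = pref w l.

Definition R1 (n : nat) (eta : seq (alph n) -> bool) (w : nat -> alph n) (N k l : nat) :=
  (forall v, in_union w l k v -> eta v = true) /\
  (forall v, in_union w (l - N) (2 * N + k) v -> ~ in_union w l k v -> eta v = false).
Definition R2 (n : nat) (w : nat -> alph n) (N l : nat) :=
  (4 * n - 4 < letter_val (w (l - N)))%N.

Definition is_random (n : nat) (R : realType) (nu : probability (wordsT n) R)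
    (eta : seq (alph n) -> bool) :=
  {ae nu, forall w : wordsT n, forall N k : nat,
      exists l : nat, (N <= l)%N /\ R1 eta w N k l /\ R2 w N l}.

(* Fix N and k and run "trials" at the positions l_t = t * (2N+k+1) + N.  Whether (R1) and (R2)
   hold at l_t depends on w only through its first l_t + 1 letters and on eta only through the
   words of length in [l_t - N, l_t + N + k); these windows are disjoint for distinct t.  (R2)
   holds for at least one of the 5n-6 possible letters w(l_t - N) as soon as n >= 3, and then (R1)
   prescribes eta on the finite block of words extending w(l_t - N) by fewer than 2N+k letters, an
   event of mu-probability p = 2^-(size of the block) independent of the earlier windows.  Hence
   the nu x mu probability that the first m trials all fail is at most (1 - p/(5n-6))^m.  By
   Markov's inequality, for mu-a.e. eta the nu-measure of the words failing every trial is 0, for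
   all N and k simultaneously. *)

From HB Require Import structures.
From mathcomp Require Import all_boot all_order all_algebra.
From mathcomp Require Import all_classical all_reals all_analysis.
From mathcomp Require Import measurable_realfun zify ring.
Set Implicit Arguments. Unset Strict Implicit. Unset Printing Implicit Defensive.
Import Order.TTheory GRing.Theory Num.Theory.
Local Open Scope classical_set_scope.
Local Open Scope ring_scope.

Lemma sumr_const_seq (V : nmodType) (I : Type) (r : seq I) (x : V) :
  \sum_(i <- r) x = x *+ size r.
Proof. by elim: r => [|a r IH]; rewrite ?big_nil ?big_cons ?IH ?mulrS. Qed.

Lemma natr_count (V : pzSemiRingType) (I : Type) (P : pred I) (s : seq I) :
  (count P s)%:R = \sum_(x <- s) (P x)%:R :> V.
Proof. by elim: s => [|x s IH]; rewrite ?big_nil ?big_cons //= natrD IH. Qed.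

Section Words.
Variable T : finType.

Fixpoint words (j : nat) : seq (seq T) :=
  if j is j'.+1 then [seq a :: s | a <- enum T, s <- words j'] else [:: [::]].

Lemma mem_words j s : (s \in words j) = (size s == j).
Proof.
elim: j s => [|j IH] [|a s] /=; try by rewrite inE.
- by apply/negbTE/negP => /allpairsP [[b t]] /= [_ _].
- rewrite eqSS -IH; apply/allpairsP/idP => [[[b t]] /= [_ Ht [_ ->]] //|Hs].
  by exists (a, s); rewrite mem_enum.
Qed.

Lemma uniq_words j : uniq (words j).
Proof.
elim: j => [|j IH] //=; apply: allpairs_uniq => //; first exact: enum_uniq.
by move=> [a s] [b t] _ _ /= [-> ->].
Qed.

Lemma size_words j : size (words j) = (#|T| ^ j)%N.
Proof. by elim: j => [|j IH] //=; rewrite size_allpairs IH -cardE expnS. Qed.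

Lemma big_words_cat (V : nmodType) i j (F : seq T -> V) :
  \sum_(s <- words (i + j)) F s = \sum_(x <- words i) \sum_(y <- words j) F (x ++ y).
Proof.
elim: i F => [|i IH] F; first by rewrite add0n big_seq1.
by rewrite addSn /= !big_allpairs_dep; apply: eq_bigr => a _; rewrite IH.
Qed.

Fixpoint words_lt (r : nat) : seq (seq T) :=
  if r is r'.+1 then words_lt r' ++ words r' else [::].

Lemma mem_words_lt r s : (s \in words_lt r) = (size s < r)%N.
Proof.
elim: r => [|r IH] //=.
by rewrite mem_cat IH mem_words ltnS [in RHS]leq_eqVlt orbC.
Qed.

Lemma uniq_words_lt r : uniq (words_lt r).
Proof.
elim: r => [|r IH] //=; rewrite cat_uniq IH uniq_words /= andbT.
by apply/hasPn => s; rewrite mem_words mem_words_lt => /eqP ->; rewrite ltnn.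
Qed.

End Words.

Section Probability.
Variables (d : measure_display) (T : measurableType d) (R : realType).

Lemma negligible_bigcap (mu : {measure set T -> \bar R}) (F : nat -> set T) :
  (forall m, measurable (F m)) ->
  (forall j, exists m, mu (F m) < (j.+1%:R^-1)%:E)%E ->
  mu.-negligible (\bigcap_m F m).
Proof.
move=> mF small; have mcap := bigcapT_measurable mF.
exists (\bigcap_m F m); split => //.
have le_F m : (mu (\bigcap_m F m) <= mu (F m))%E.
  by apply: le_measure; rewrite ?inE // => x /(_ m I).
apply/eqP; rewrite eq_le measure_ge0 andbT.
apply/lee_addgt0Pr => e e0; rewrite add0e.
have [j] := ltr_add_invr e0; rewrite add0r => je.
have [m mj] := small j.
by apply: le_trans (le_F m) _; apply: le_trans (ltW mj) _; rewrite lee_fin ltW.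
Qed.

Lemma markov_ge0 (mu : {measure set T -> \bar R}) (g : T -> \bar R) (eps : R) :
  measurable_fun setT g -> (forall x, 0 <= g x)%E -> 0 < eps ->
  (eps%:E * mu [set x | eps%:E <= g x] <= \int[mu]_x g x)%E.
Proof.
move=> mg g0 eps0.
have := @le_integral_comp_abse _ _ _ mu _ measurableT g eps id
  (@measurable_id _ _ setT) (fun r h => h) (fun x _ y _ h => h) mg eps0.
rewrite setTI (_ : [set x | _ <= `|g x|] = [set x | eps%:E <= g x])%E; last first.
  by apply/seteqP; split => x /=; rewrite gee0_abs.
by rewrite (eq_integral g) // => x _; rewrite gee0_abs.
Qed.

Variable P : probability T R.

Definition pr (X : set T) : R := fine (P X).

Lemma prE X : measurable X -> P X = (pr X)%:E.
Proof. by move=> mX; rewrite /pr fineK // fin_num_measure. Qed.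

Lemma pr_ge0 X : 0 <= pr X.
Proof. exact/fine_ge0/measure_ge0. Qed.

Lemma prU X Y : measurable X -> measurable Y -> X `&` Y = set0 ->
  pr (X `|` Y) = pr X + pr Y.
Proof. by move=> mX mY XY; rewrite /pr measureU // fineD // fin_num_measure. Qed.

Lemma pr_setT : pr setT = 1.
Proof. by rewrite /pr probability_setT. Qed.

Lemma pr_set0 : pr set0 = 0.
Proof. by rewrite /pr measure0. Qed.

End Probability.

Section ChoiceFunctions.
Variable n : nat.
Local Notation A := (alph n).

Definition depends_on (U : seq (seq A)) (P : (seq A -> bool) -> Prop) :=
  forall e1 e2 : seq A -> bool, {in U, e1 =1 e2} -> P e1 -> P e2.

Definition upd (e : seq A -> bool) u b : seq A -> bool :=
  fun v => if v == u then b else e v.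

Definition agree_on (W : seq (seq A)) (c : seq A -> bool) :=
  [set e : choiceT n | {in W, e =1 c}].

Lemma depends_on_nil P :
  depends_on [::] P -> [set e : choiceT n | P e] = setT \/ [set e : choiceT n | P e] = set0.
Proof.
move=> dP; have [[e0 Pe0]|noP] := pselect (exists e, P e); [left|right].
- by apply/seteqP; split => // e _; exact: dP Pe0.
- by apply/seteqP; split => // e Pe; apply: noP; exists e.
Qed.

Lemma depends_on_upd U P u b :
  depends_on (u :: U) P -> depends_on U (fun e => P (upd e u b)).
Proof.
move=> dP e1 e2 e12; apply: dP => v; rewrite in_cons /upd.
by case: eqP => //= _; exact: e12.
Qed.

Lemma depends_on_agree_on W c : depends_on W (fun e => {in W, e =1 c}).
Proof. by move=> e1 e2 e12 e1c u uW; rewrite -e12 // e1c. Qed.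

Lemma setI_split_coord P u (X : set (choiceT n)) :
  [set e : choiceT n | P e] `&` X =
  ([set e : choiceT n | P (upd e u true)] `&` ([set e | e u = true] `&` X)) `|`
  ([set e : choiceT n | P (upd e u false)] `&` ([set e | e u = false] `&` X)).
Proof.
have updK (e : seq A -> bool) : upd e u (e u) = e.
  by apply: funext => v; rewrite /upd; case: eqP => // ->.
apply/seteqP; split => e /=.
- by case=> Pe Xe; case eu: (e u); [left|right]; rewrite -eu updK.
- by case=> -[Pe [eu Xe]]; split => //; rewrite -(updK e) eu.
Qed.

Lemma setI_coord_agree_on u W c b : u \notin W ->
  [set e : choiceT n | e u = b] `&` agree_on W c = agree_on (u :: W) (upd c u b).
Proof.
move=> uW; apply/seteqP; split => e /=.
- by case=> eu ec v; rewrite in_cons /upd; case: eqP => [->|_] //= /ec.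
- move=> ec; split; first by rewrite ec ?mem_head // /upd eqxx.
  move=> v vW; rewrite ec ?in_cons ?vW ?orbT // /upd.
  by case: eqP => // vu; rewrite -vu vW in uW.
Qed.

Lemma measurable_coord u b : measurable [set e : choiceT n | e u = b].
Proof. by apply: sub_sigma_algebra; exists u, b. Qed.

Lemma measurable_depends_on U P : depends_on U P -> measurable [set e : choiceT n | P e].
Proof.
elim: U P => [|u U IH] P dP; first by case: (depends_on_nil dP) => ->.
rewrite -[X in measurable X]setIT (setI_split_coord P u).
by apply: measurableU; apply: measurableI; rewrite ?setIT;
  try exact: measurable_coord; exact: IH (depends_on_upd dP).
Qed.

Lemma measurable_agree_on W c : measurable (agree_on W c).
Proof. exact: measurable_depends_on (@depends_on_agree_on W c). Qed.

End ChoiceFunctions.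

Section Independence.
Variables (n : nat) (R : realType) (mu : probability (choiceT n) R).
Hypothesis mu_cylE : mu_cyl mu.
Local Notation pr := (pr mu).

Lemma pr_agree_on W c : uniq W -> pr (agree_on W c) = 2^-1 ^+ size W.
Proof. by move=> uW; rewrite /pr /agree_on mu_cylE. Qed.

Lemma pr_independent U P W c : uniq U -> depends_on U P -> uniq W ->
  {in W, forall v, v \notin U} ->
  pr ([set e : choiceT n | P e] `&` agree_on W c) =
  2^-1 ^+ size W * pr [set e : choiceT n | P e].
Proof.
elim: U P W c => [|u U IH] P W c.
  move=> _ /depends_on_nil [->|->] uW _; last by rewrite set0I pr_set0 mulr0.
  by rewrite setTI pr_agree_on // pr_setT mulr1.
case/andP=> uU uniqU dP uW WU.
pose Pb b := [set e : choiceT n | P (upd e u b)].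
have mPbI b W' c' : measurable (Pb b `&` ([set e | e u = b] `&` agree_on W' c')).
  apply: measurableI; first exact: measurable_depends_on (depends_on_upd dP).
  exact: measurableI (measurable_coord _ _) (measurable_agree_on _ _).
have pr_split W' c' : uniq W' -> {in W', forall v, v \notin u :: U} ->
    pr ([set e | P e] `&` agree_on W' c') =
    2^-1 ^+ (size W').+1 * (pr (Pb true) + pr (Pb false)).
  move=> uW' W'U; have uW'u : u \notin W' by apply/negP => /W'U; rewrite mem_head.
  have W'uU v : v \in u :: W' -> v \notin U.
    by rewrite in_cons => /predU1P[->//|/W'U]; rewrite in_cons negb_or => /andP[].
  rewrite (setI_split_coord P u) prU; first last.
  - by apply/seteqP; split => // e /= [[_ [eu _]] [_ [+ _]]]; rewrite eu.
  - exact: mPbI.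
  - exact: mPbI.
  rewrite !setI_coord_agree_on // !IH //= ?uW'u ?mulrDr //;
    exact: depends_on_upd.
(* Splitting on [u] gives the same expression for [W] and for the empty list. *)
rewrite pr_split // -(setIT [set e : choiceT n | P e]).
rewrite (_ : setT = agree_on [::] c); last by apply/seteqP; split.
by rewrite pr_split //= exprSr expr1 mulrA.
Qed.

End Independence.

Section Prefixes.
Variable n : nat.
Local Notation A := (alph n).

(* The letters after [x] are junk; only prefixes of length at most [size x] are ever read. *)
Definition pad (x : seq A) : nat -> A := nth ord0 x.

Lemma size_pref (w : nat -> A) j : size (pref w j) = j.
Proof. exact: size_mkseq. Qed.

Lemma eq_pref (w w' : nat -> A) j :
  (forall i, (i < j)%N -> w i = w' i) -> pref w j = pref w' j.
Proof. by move=> ww'; apply/eq_in_map => i; rewrite mem_iota add0n => /ww'. Qed.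

Lemma pref_pad (x : seq A) j : (j <= size x)%N -> pref (pad x) j = take j x.
Proof. exact: map_nth_iota0. Qed.

Lemma take_pref (w : nat -> A) i j : (i <= j)%N -> take i (pref w j) = pref w i.
Proof. by move=> ij; rewrite /pref /mkseq -map_take take_iota (minn_idPl ij). Qed.

End Prefixes.

Section Cylinders.
Variables (n : nat) (R : realType) (nu : probability (wordsT n) R).
Hypothesis nu_cylE : nu_cyl nu.
Local Notation A := (alph n).
Local Notation c := ((5 * n - 6)%:R : R).

Lemma measurable_pref_eq x : measurable [set w : wordsT n | pref w (size x) = x].
Proof. by apply: sub_sigma_algebra; exists x. Qed.

Lemma nu_pref_in L s : uniq s -> all (fun x => size x == L) s ->
  measurable [set w : wordsT n | pref w L \in s] /\
  nu [set w : wordsT n | pref w L \in s] = ((size s)%:R * c ^- L)%:E.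
Proof.
elim: s => [|x s IH] /=.
  rewrite mul0r (_ : [set w | _] = set0) ?measure0 //.
  by apply/seteqP; split.
case/andP=> xs us /andP[/eqP sx sz]; have [ms nus] := IH us sz.
have -> : [set w : wordsT n | pref w L \in x :: s] =
    [set w : wordsT n | pref w (size x) = x] `|` [set w : wordsT n | pref w L \in s].
  apply/seteqP; split => w /=; rewrite in_cons sx.
    by case/predU1P; [left | right].
  by case=> [->|ws]; rewrite ?eqxx ?ws ?orbT.
split; first exact: measurableU (measurable_pref_eq x) ms.
rewrite measureU //; first last.
- by apply/seteqP; split => // w [/= wx]; rewrite -sx wx (negbTE xs).
- exact: measurable_pref_eq.
have nux : nu [set w : wordsT n | pref w (size x) = x] = (c ^- L)%:E.
  by rewrite -sx nu_cylE.
by rewrite -natr1 mulrDl mul1r EFinD -nus -nux addrC.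
Qed.

Lemma nu_pref_pred L (S : pred (seq A)) :
  measurable [set w : wordsT n | S (pref w L)] /\
  nu [set w : wordsT n | S (pref w L)] = (\sum_(x <- words A L) (S x)%:R * c ^- L)%:E.
Proof.
have -> : [set w : wordsT n | S (pref w L)] =
    [set w | pref w L \in [seq x <- words A L | S x]].
  by apply/seteqP; split => w /=; rewrite mem_filter mem_words size_pref eqxx andbT.
rewrite -mulr_suml -natr_count -size_filter.
apply: nu_pref_in; first exact/filter_uniq/uniq_words.
by apply/allP => x; rewrite mem_filter mem_words => /andP[].
Qed.

End Cylinders.

Section Trials.
Variables n N k : nat.
Local Notation A := (alph n).

Definition high (a : A) := (4 * n - 4 < letter_val a)%N.

Definition block (z : seq A) := [seq z ++ s | s <- words_lt A (2 * N + k)].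

Definition pattern (w : nat -> A) l (v : seq A) :=
  [&& (l <= size v)%N, (size v < l + k)%N & take l v == pref w l].

Lemma uniq_block z : uniq (block z).
Proof.
rewrite map_inj_uniq ?uniq_words_lt // => s t /eqP.
by rewrite eqseq_cat // eqxx => /eqP.
Qed.

Lemma mem_block z v : (v \in block z) =
  [&& (size z <= size v)%N, (size v < size z + (2 * N + k))%N & take (size z) v == z].
Proof.
apply/mapP/and3P => [[s + ->]|[zv vz /eqP <-]].
  by rewrite mem_words_lt size_cat take_size_cat // leq_addr ltn_add2l.
exists (drop (size z) v); last by rewrite cat_take_drop.
by rewrite mem_words_lt size_drop ltn_subLR // addnC.
Qed.

Lemma R1_block eta (w : nat -> A) l : (N <= l)%N ->
  R1 eta w N k l <-> {in block (pref w (l - N)), eta =1 pattern w l}.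
Proof.
move=> Nl.
have in_outer v : in_union w (l - N) (2 * N + k) v <-> v \in block (pref w (l - N)).
  rewrite /in_union mem_block size_pref; split => [[/andP[-> ->] ->]|/and3P[-> -> /eqP //]].
  by rewrite eqxx.
have in_inner v : in_union w l k v <-> pattern w l v.
  rewrite /in_union /pattern.
  by split => [[/andP[-> ->] ->]|/and3P[-> -> /eqP]] //; rewrite eqxx.
have inner_outer v : in_union w l k v -> in_union w (l - N) (2 * N + k) v.
  case=> /andP[lv vlk] vw; split.
    by apply/andP; split; [exact: leq_trans (leq_subr _ _) lv | lia].
  by rewrite -(take_takel _ (leq_subr N l)) vw take_pref ?leq_subr.
split=> [[R1in R1out] v /in_outer vB|R1B]; last split.
- case pv: (pattern w l v); first exact/R1in/in_inner.
  by apply: R1out => // /in_inner; rewrite pv.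
- by move=> v vin; rewrite R1B; [exact/in_inner | exact/in_outer/inner_outer].
- by move=> v /in_outer vB vin; rewrite R1B //; apply/negbTE/negP => /in_inner.
Qed.

Lemma R1_eq_short (eta eta' : seq A -> bool) (w : nat -> A) l : (N <= l)%N ->
  (forall v, (size v < l + N + k)%N -> eta v = eta' v) -> R1 eta w N k l -> R1 eta' w N k l.
Proof.
move=> Nl eta_eq [R1in R1out]; split=> [v vin|v vout vin]; rewrite -eta_eq.
- exact: R1in.
- by case: vin => /andP[_]; lia.
- exact: R1out.
- by case: vout => /andP[_]; lia.
Qed.

Definition gap := (2 * N + k).+1.

Definition trial_ok (eta : seq A -> bool) (w : nat -> A) t :=
  R1 eta w N k (t * gap + N) /\ R2 w N (t * gap + N).

Definition fail_set (x : seq A) m :=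
  [set e : choiceT n | forall t, (t < m)%N -> ~ trial_ok e (pad x) t].

Lemma trial_end_lt t m : (t < m)%N -> (t * gap + N + N + k < m * gap)%N.
Proof. by move=> tm; have := leq_mul tm (leqnn gap); rewrite mulSn /gap; lia. Qed.

Lemma eq_trial_ok eta (w w' : nat -> A) t :
  (forall i, (i <= t * gap + N)%N -> w i = w' i) -> trial_ok eta w t <-> trial_ok eta w' t.
Proof.
move=> ww'; rewrite /trial_ok /R1 /R2 /in_union (ww' (_ - N)%N) ?leq_subr //.
rewrite (@eq_pref _ w w' (t * gap + N)) => [|i /ltnW]; last exact: ww'.
by rewrite (@eq_pref _ w w' (t * gap + N - N)) // => i iN; apply: ww'; lia.
Qed.

Lemma trial_ok_depends w t r : (t * gap + N + N + k <= r)%N ->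
  depends_on (words_lt A r) (fun e => trial_ok e w t).
Proof.
move=> tr e1 e2 e12 [R1e1 R2w]; split=> //; apply: R1_eq_short R1e1; first exact: leq_addl.
by move=> v vt; apply: e12; rewrite mem_words_lt (leq_trans vt tr).
Qed.

Lemma trial_lt i t m : (t < m)%N -> (i <= t * gap + N)%N -> (i < m * gap)%N.
Proof.
move=> tm it; apply: leq_ltn_trans it (leq_ltn_trans _ (trial_end_lt tm)).
by rewrite -addnA leq_addr.
Qed.

Lemma fail_set_depends x m :
  depends_on (words_lt A (m * gap)) (fun e => forall t, (t < m)%N -> ~ trial_ok e (pad x) t).
Proof.
move=> e1 e2 e12 fail1 t tm ok2; apply: (fail1 t tm).
by apply: (trial_ok_depends (ltnW (trial_end_lt tm))) ok2 => v /e12.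
Qed.

Lemma measurable_fail_set x m : measurable (fail_set x m).
Proof. exact: measurable_depends_on (@fail_set_depends x m). Qed.

Lemma trial_ok_cat eta x y t m : size x = (m * gap)%N -> (t < m)%N ->
  trial_ok eta (pad (x ++ y)) t <-> trial_ok eta (pad x) t.
Proof.
by move=> sx tm; apply: eq_trial_ok => i it; rewrite /pad nth_cat sx (trial_lt tm it).
Qed.

Lemma fail_set_cat x y m : size x = (m * gap)%N -> fail_set (x ++ y) m = fail_set x m.
Proof.
move=> sx; apply/seteqP; split => e /= fail t tm ok; apply: (fail t tm).
  exact: (trial_ok_cat e y sx tm).2 ok.
exact: (trial_ok_cat e y sx tm).1 ok.
Qed.

Lemma fail_setS x y m : size x = (m * gap)%N ->
  fail_set (x ++ y) m.+1 = fail_set x m `&` ~` [set e | trial_ok e (pad (x ++ y)) m].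
Proof.
move=> sx; rewrite -(fail_set_cat y sx); apply/seteqP; split => e /=.
- by move=> fail; split=> [t /ltnW|]; apply: fail.
- by case=> fail okm t; rewrite ltnS leq_eqVlt => /predU1P[->|/fail].
Qed.

Lemma trial_setE x y m : size x = (m * gap)%N ->
  [set e : choiceT n | trial_ok e (pad (x ++ y)) m] =
  if high (nth ord0 y 0) then agree_on (block x) (pattern (pad (x ++ y)) (m * gap + N))
  else set0.
Proof.
move=> sx; have letter_N : pad (x ++ y) (m * gap + N - N) = nth ord0 y 0.
  by rewrite addnK /pad nth_cat sx ltnn subnn.
have pref_N : pref (pad (x ++ y)) (m * gap + N - N) = x.
  by rewrite addnK pref_pad ?size_cat ?sx ?leq_addr // -sx take_size_cat.
apply/seteqP; split => e /=.
- by case; rewrite /R2 letter_N => + hy; rewrite /high hy R1_block ?leq_addl // pref_N.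
- case: ifP => // hy eB; split; last by rewrite /R2 letter_N.
  by rewrite R1_block ?leq_addl // pref_N.
Qed.

Lemma fail_set_pref eta (w : nat -> A) :
  (forall l, (N <= l)%N -> ~ (R1 eta w N k l /\ R2 w N l)) ->
  forall m, eta \in fail_set (pref w (m * gap)) m.
Proof.
move=> never m; rewrite inE => t tm ok; apply: (never (t * gap + N)%N (leq_addl _ _)).
have agree i : (i <= t * gap + N)%N -> pad (pref w (m * gap)) i = w i.
  by move=> it; rewrite /pad nth_mkseq // (trial_lt tm it).
exact: (eq_trial_ok _ agree).1 ok.
Qed.

End Trials.

Section FailureProbability.
Variables (n : nat) (R : realType) (mu : probability (choiceT n) R).
Hypothesis mu_cylE : mu_cyl mu.
Hypothesis n_gt2 : (2 < n)%N.
Variables N k : nat.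
Local Notation A := (alph n).
Local Notation pr := (pr mu).
Local Notation gap := (gap N k).
Local Notation fail_set := (fail_set N k).
Local Notation c := ((5 * n - 6)%:R : R).

Definition pblock : R := 2^-1 ^+ size (words_lt A (2 * N + k)).

Lemma pblock_gt0 : 0 < pblock.
Proof. by rewrite exprn_gt0 // invr_gt0. Qed.

Lemma pblock_le1 : pblock <= 1.
Proof. by rewrite exprn_ile1 // ?invr_ge0 // invf_le1 // ler1n. Qed.

Lemma card_alph : #|A| = (5 * n - 6)%N.
Proof. by rewrite card_ord; lia. Qed.

Lemma c_gt1 : 1 < c.
Proof. by rewrite ltr1n; lia. Qed.

Lemma c_gt0 : 0 < c.
Proof. exact: lt_trans ltr01 c_gt1. Qed.

Lemma pr_fail_set_agree_block x m b : size x = (m * gap)%N ->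
  pr (fail_set x m `&` agree_on (block N k x) b) = pblock * pr (fail_set x m).
Proof.
move=> sx; rewrite /pblock -(size_map (cat x)) (pr_independent mu_cylE b
  (uniq_words_lt _ _) (@fail_set_depends n N k x m) (uniq_block N k x)) //.
by move=> v; rewrite mem_block mem_words_lt sx -leqNgt => /and3P[].
Qed.

Lemma pr_fail_setS x y m : size x = (m * gap)%N ->
  pr (fail_set (x ++ y) m.+1) = pr (fail_set x m) * (1 - (high (nth ord0 y 0))%:R * pblock).
Proof.
move=> sx; rewrite fail_setS // trial_setE //.
case: ifP => _; last by rewrite setC0 setIT mul0r subr0 mulr1.
set F := fail_set x m; set B := agree_on _ _.
have mF : measurable F := measurable_fail_set N k x m.
have mB : measurable B := measurable_agree_on _ _.
have : pr F = pr (F `&` B) + pr (F `&` ~` B).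
  rewrite -prU; first by rewrite -setDE setUIDK.
  - exact: measurableI.
  - exact/measurableI/measurableC.
  by apply/seteqP; split => // e [[_ Be] [_ nBe]].
rewrite pr_fail_set_agree_block // => prF.
by rewrite mul1r mulrBr mulr1 {1}prF [pr F * _]mulrC addrAC subrr add0r.
Qed.

Lemma sum_not_high_le : \sum_(a <- enum A) (1 - (high a)%:R * pblock) <= c - pblock.
Proof.
have count_high : (0 < count (@high n) (enum A))%N.
  rewrite -has_count; apply/hasP; exists ord_max; first exact: mem_enum.
  by rewrite /high /letter_val /=; lia.
rewrite sumrB sumr_const_seq -mulr_suml -natr_count -cardE card_alph.
by rewrite lerD2l lerN2 ler_peMl ?ler1n // ltW // pblock_gt0.
Qed.

Definition mean_fail m :=
  \sum_(x <- words A (m * gap)) c ^- (m * gap) * pr (fail_set x m).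

Lemma mean_failS m : mean_fail m.+1 <= (1 - pblock / c) * mean_fail m.
Proof.
rewrite /mean_fail (mulSnr m gap) big_words_cat mulr_sumr !big_seq; apply: ler_sum => x.
rewrite mem_words => /eqP sx; rewrite [words A gap]/= big_allpairs_dep /=.
under eq_bigr => a _ do under eq_bigr => s _ do rewrite pr_fail_setS //=.
under eq_bigr => a _ do rewrite sumr_const_seq size_words card_alph.
set pF := pr (fail_set x m); set K := ((5 * n - 6) ^ (2 * N + k))%N.
rewrite (eq_bigr (fun a => c ^- (m * gap + gap) * pF * K%:R * (1 - (high a)%:R * pblock)));
  last by move=> a _; rewrite -mulr_natr; ring.
rewrite -mulr_sumr; apply: le_trans (ler_wpM2l _ sum_not_high_le) _.
  by rewrite !mulr_ge0 ?pr_ge0 ?invr_ge0 ?exprn_ge0 ?ler0n // ltW // c_gt0.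
rewrite /K natrX exprD /gap exprS le_eqVlt; apply/orP; left; apply/eqP.
by field; rewrite !expf_neq0 // gt_eqF // c_gt0.
Qed.

Lemma mean_fail0 : mean_fail 0 = 1.
Proof.
rewrite /mean_fail mul0n big_seq1 expr0 invr1 mul1r.
by rewrite (_ : fail_set _ 0 = setT) ?pr_setT //; apply/seteqP; split.
Qed.

Lemma mean_fail_small eps : 0 < eps -> exists m, mean_fail m < eps.
Proof.
move=> eps0; have ratio_ge0 : 0 <= 1 - pblock / c.
  rewrite subr_ge0 ler_pdivrMr ?mul1r ?c_gt0 //.
  exact: le_trans pblock_le1 (ltW c_gt1).
have ratio_lt1 : `|1 - pblock / c| < 1.
  by rewrite ger0_norm // ltrBlDr ltrDl divr_gt0 ?pblock_gt0 ?c_gt0.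
have [M _ smallM] := cvgr_lt 0 (cvg_expr ratio_lt1) eps eps0.
exists M; apply: le_lt_trans (smallM M (leqnn M)).
elim: M {smallM} => [|m IH]; first by rewrite mean_fail0 expr0.
by apply: le_trans (mean_failS m) _; rewrite exprS ler_wpM2l.
Qed.

End FailureProbability.

Section FailureWeight.
Variables (n : nat) (R : realType).
Variables (mu : probability (choiceT n) R) (nu : probability (wordsT n) R).
Hypotheses (mu_cylE : mu_cyl mu) (nu_cylE : nu_cyl nu) (n_gt2 : (2 < n)%N).
Variables N k : nat.
Local Notation gap := (gap N k).
Local Notation fail_set := (fail_set N k).
Local Notation c := ((5 * n - 6)%:R : R).

Definition fail_words m (e : choiceT n) :=
  [set w : wordsT n | e \in fail_set (pref w (m * gap)) m].

Definition fail_weight m (e : choiceT n) := nu (fail_words m e).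

Lemma measurable_fail_words m e : measurable (fail_words m e).
Proof. by case: (nu_pref_pred nu_cylE (m * gap) (fun x => e \in fail_set x m)). Qed.

Lemma fail_weightE m e : fail_weight m e =
  (\sum_(x <- words _ (m * gap)) (c ^- (m * gap) * \1_(fail_set x m) e)%:E)%E.
Proof.
rewrite /fail_weight /fail_words.
have [_ ->] := nu_pref_pred nu_cylE (m * gap) (fun x => e \in fail_set x m).
by rewrite sumEFin; congr _%:E; apply: eq_bigr => x _; rewrite indicE mulrC.
Qed.

Lemma measurable_fail_weight m : measurable_fun setT (fail_weight m).
Proof.
rewrite (funext (fail_weightE m)); apply: emeasurable_sum => x.
apply/measurable_EFinP/measurable_funM; first exact: measurable_cst.
by apply: measurable_indic; exact: measurable_fail_set.
Qed.

Lemma integral_fail_weight m : (\int[mu]_e fail_weight m e = (mean_fail mu N k m)%:E)%E.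
Proof.
have c_ge0 : 0 <= c ^- (m * gap) by rewrite invr_ge0 exprn_ge0.
have m_indic x : measurable_fun setT (\1_(fail_set x m) : choiceT n -> R).
  by apply: measurable_indic; exact: measurable_fail_set.
rewrite (funext (fail_weightE m)) ge0_integral_sum //; last first.
  by move=> x; apply/measurable_EFinP/measurable_funM; first exact: measurable_cst.
rewrite /mean_fail -sumEFin; apply: eq_bigr => x _.
under eq_integral do rewrite EFinM.
rewrite ge0_integralZl_EFin //; last exact/measurable_EFinP.
have mF := measurable_fail_set N k x m.
by rewrite integral_indic // setIT EFinM -(prE mu mF).
Qed.

Lemma negligible_fail_weight_ge eps : 0 < eps ->
  mu.-negligible (\bigcap_m [set e | (eps%:E <= fail_weight m e)%E]).
Proof.
move=> eps0; apply: negligible_bigcap => [m|j].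
  rewrite -[X in measurable X]setTI.
  exact: emeasurable_fun_c_infty measurableT (measurable_fail_weight m) _.
have j_gt0 : 0 < j.+1%:R^-1 :> R by rewrite invr_gt0.
have [m small] := mean_fail_small mu_cylE n_gt2 N k (mulr_gt0 eps0 j_gt0).
exists m; have := markov_ge0 mu (measurable_fail_weight m) (fun e => measure_ge0 _ _) eps0.
rewrite integral_fail_weight -lee_pdivlMl // => /le_lt_trans; apply.
by rewrite -EFinM lte_fin mulrC ltr_pdivrMr // mulrC.
Qed.

End FailureWeight.

Lemma is_random_of_fail_weight (n : nat) (R : realType) (nu : probability (wordsT n) R) e :
  nu_cyl nu ->
  (forall N k j, exists m, (fail_weight nu N k m e < (j.+1%:R^-1)%:E)%E) -> is_random nu e.
Proof.
move=> nu_cylE small.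
apply: (negligibleS (A := \bigcup_N \bigcup_k \bigcap_m fail_words N k m e)).
  move=> w /= /existsNP[N /existsNP[k /forallNP never]].
  exists N => //; exists k => // m _; apply: fail_set_pref => l Nl ok.
  exact: never l (conj Nl ok).
apply: negligible_bigcup => N; apply: negligible_bigcup => k.
by apply: negligible_bigcap => [m|]; [exact: measurable_fail_words | exact: small].
Qed.

Theorem proposition7p1 (R : realType) (n : nat) :
  (4 <= n)%N -> ~~ odd n ->
  forall nu : probability (wordsT n) R, nu_cyl nu ->
  forall mu : probability (choiceT n) R, mu_cyl mu ->
  {ae mu, forall eta : choiceT n, is_random nu eta}.
Proof.
move=> n_ge4 _ nu nu_cylE mu mu_cylE.
have n_gt2 : (2 < n)%N by apply: leq_trans n_ge4.
pose bad N k j := \bigcap_m [set e | ((j.+1%:R^-1)%:E <= fail_weight nu N k m e)%E].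
apply: (negligibleS (A := \bigcup_N \bigcup_k \bigcup_j bad N k j)); last first.
  do 3 apply: negligible_bigcup => ?.
  by apply: negligible_fail_weight_ge mu_cylE nu_cylE n_gt2 _ _ _ _.
move=> e /= not_random; apply: contrapT => not_bad; apply: not_random.
apply: is_random_of_fail_weight nu_cylE _ => N k j.
apply: contrapT => large; apply: not_bad; exists N => //; exists k => //; exists j => // m _.
by rewrite /= leNgt; apply/negP => lt_m; apply: large; exists m.
Qed.
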